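(* Consider the full information setting of online multiclass classification (every prediction reveals the true label $y_t$, i.e. the feedback graph is complete, so $\mathcal{Q}=[K]$, $\gamma_t=0$ and $v_t=1$ for all $t$). Suppose that for every round $t$, $\ell_t=\ell(\cdot,\mathbf{x}_t,y_t)$ is a regular surrogate loss with respect to $\ell$ with constant $L$, and that the OCO algorithm $\mathcal{A}$ satisfies, for some $h:\mathcal{W}\to\mathbb{R}_+$ and every $\mathbf{U}\in\mathcal{W}$, $\sum_{t=1}^T(\widehat\ell_t(\mathbf{W}_t)-\widehat\ell_t(\mathbf{U}))\le h(\mathbf{U})\sqrt{\sum_{t=1}^T\|\widehat{\mathbf{g}}_t\|^2}$ with $\widehat{\mathbf{g}}_t=v_t\nabla\ell_t(\mathbf{W}_t)$. Run Gappletron with $\mathcal{A}$ and a gap map $a:\mathbb{R}^{K\times d}\times\mathbb{R}^d\to[0,1]$ satisfying $a(\mathbf{W}_t,\mathbf{x}_t)=\ell(\mathbf{W}_t,\mathbf{x}_t,y_t^\star)$. Then for every $\delta\in(0,1)$, with probability at least $1-\delta$, $$\sum_{t=1}^T\mathbb{1}[y_t'\ne y_t]\le\sum_{t=1}^T\ell_t(\mathbf{U})+KLh(\mathbf{U})^2+\frac{3K+1}{2}\ln\frac1\delta\qquad\forall\,\mathbf{U}\in\mathcal{W}.$$ Furthermore, for all $\mathbf{U}\in\mathcal{W}$ such that $\sum_{t=1}^T\ell_t(\mathbf{U})=0$, with probability at least $1-\delta$, $\sum_{t=1}^T\mathbb{1}[y_t'\ne y_t]\le 4Lh(\mathbf{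U})^2+\frac{11}{4}\ln\frac1\delta$.
   Context: Setting: for $t=1,\dots,T$ an oblivious adversary fixes $\mathbf{x}_t\in\mathbb{R}^d$, $y_t\in[K]$; the learner predicts $y_t'\in[K]$ and then observes $y_t$. Predictors $\mathbf{W}\in\mathcal{W}\subseteq\mathbb{R}^{K\times d}$ ($\mathcal{W}$ convex), rows $\mathbf{W}^k$, identified with vectors of $\mathbb{R}^{Kd}$; $\|\cdot\|$ a fixed norm on $\mathbb{R}^{Kd}$. $\ell:\mathcal{W}\times\mathbb{R}^d\times[K]\to\mathbb{R}_+$ is convex in $\mathbf{W}$ with $\frac{K-1}{K}\ell(\mathbf{W},\mathbf{x},y)+\frac1K\ell(\mathbf{W},\mathbf{x},y^\star)\ge1$ for all $\mathbf{W},\mathbf{x}$ and all $y\ne y^\star:=\arg\max_k\langle\mathbf{W}^k,\mathbf{x}\rangle$; $\ell_t$ is a regular surrogate loss with constant $L>0$ if moreover $\|\nabla\ell_t(\mathbf{W})\|^2\le2L\ell_t(\mathbf{W})$ for all $\mathbf{W}\in\mathcal{W}$. Gappletron in this setting (general version: inputs revealing set $\mathcal{Q}$, minimum dominating set $S$ of the feedback graph with $|S|=\rho$, OCO algorithm $\mathcal{A}$, $\gamma\ge0$, gap map $a$): $\mathbf{W}_1$ from $\mathcal{A}$; at round $t$: $y_t^\star=\arg\max_k\langle\mathbf{W}_t^k,\mathbf{x}_t\rangle$; $\gamma_t=0$ if $y_t^\star\in\mathcal{Q}$ (always the case here); $a_t=a(\mathbf{W}_t,\mathbf{x}_t)$;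 $\zeta_t=\mathbb{1}[\gamma_t\le a_t]$; $\mathbf{p}_t'=(1-\zeta_ta_t-(1-\zeta_t)\gamma_t)\mathbf{e}_{y_t^\star}+\zeta_ta_t\frac1K\mathbf{1}+(1-\zeta_t)\frac{\gamma_t}{\rho}\mathbf{1}_S$ (here $\mathbf{p}_t'=(1-a_t)\mathbf{e}_{y_t^\star}+a_t\frac1K\mathbf{1}$); predict $y_t'\sim\mathbf{p}_t'$; $v_t=\mathbb{1}[y_t\text{ observed}]/P_t(y_t\text{ observed})=1$; $\widehat\ell_t=v_t\ell_t$ is fed to $\mathcal{A}$, which returns $\mathbf{W}_{t+1}$. *)

From HB Require Import structures.
From mathcomp Require Import all_boot all_order all_algebra.
From mathcomp Require Import all_classical all_reals all_analysis.
Set Implicit Arguments. Unset Strict Implicit. Unset Printing Implicit Defensive.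
Import Order.TTheory GRing.Theory Num.Theory.
Import numFieldNormedType.Exports.
Local Open Scope ring_scope.

Definition rowdot (R : realType) (K d : nat) (W : 'M[R]_(K, d)) (k : 'I_K)
  (x : 'rV[R]_d) : R := \sum_(j < d) W k j * x ord0 j.

Definition is_norm (R : realType) (K d : nat) (nrm : 'M[R]_(K, d) -> R) : Prop :=
  (forall A, 0 <= nrm A) /\ (forall A, nrm A = 0 -> A = 0) /\
  (forall (c : R) A, nrm (c *: A) = `|c| * nrm A) /\
  (forall A B, nrm (A + B) <= nrm A + nrm B).

(* Gradient of f at W: the matrix of partial derivatives, i.e. the matrix
   representing the differential 'd f W (meaningful when f is differentiable
   at W). *)
Definition gradient (R : realType) (K d : nat) (f : 'M[R]_(K, d) -> R)
  (W : 'M[R]_(K, d)) : 'M[R]_(K, d) :=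
  \matrix_(i, j) ('d f W (delta_mx i j : 'M[R]_(K, d))).

(* y* = an argmax_k <W^k, x> (ties broken by the selection map [sel]). *)
Definition is_argmax_sel (R : realType) (K d : nat)
  (sel : 'M[R]_(K, d) -> 'rV[R]_d -> 'I_K) : Prop :=
  forall W x k, rowdot W k x <= rowdot W (sel W x) x.

(* Gappletron's sampling distribution in full information:
   p'_t = (1 - a_t) e_{y*_t} + a_t (1/K) 1. *)
Definition gapp_prob (R : realType) (K : nat) (ystar : 'I_K) (a : R) (k : 'I_K) : R :=
  (1 - a) * (k == ystar)%:R + a / K%:R.

(* Probability of an event on the learner's random predictions
   (y'_1, ..., y'_T), drawn independently with y'_t ~ p t. *)
Definition prob_preds (R : realType) (K T : nat) (p : 'I_T -> 'I_K -> R)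
  (E : {ffun 'I_T -> 'I_K} -> Prop) : R :=
  \sum_(om : {ffun 'I_T -> 'I_K} | `[< E om >]) \prod_(t < T) p t (om t).

Definition mistakes (K T : nat) (y : 'I_T -> 'I_K) (om : {ffun 'I_T -> 'I_K}) : nat :=
  \sum_(t < T) (om t != y t).

(* With full information, round t is a mistake with probability 1 - p'_t(y_t),
   which is at most (K-1)/K * l_t(W_t): with equality when y_t = y*_t, since the
   gap a_t is l_t(W_t), and by the surrogate inequality otherwise.  The
   predictions are independent, so bounding the exponential moment of the
   number M of mistakes and applying Markov's inequality gives, with
   probability 1 - delta, lam M <= (e^lam - 1) sum_t E[mistake_t] + ln(1/delta).
   Regularity makes the regret bound of the OCO algorithm self-bounding,
   S - S_U <= h(U) sqrt(2 L S) for S = sum_t l_t(W_t), and AM-GM turns this into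
   (2K-1) S <= 2K (S_U + K L h(U)^2).  For lam = 2/(3K+1) one has
   (e^lam - 1)(2K-2) <= lam (2K-1), so S cancels out; when S_U = 0 one takes
   lam = 1/2 and uses S <= 2 L h(U)^2 instead. *)

From HB Require Import structures.
From mathcomp Require Import all_boot all_order all_algebra.
From mathcomp Require Import all_classical all_reals all_analysis.
From mathcomp Require Import ring lra.
Import Order.TTheory GRing.Theory Num.Theory.
Import numFieldNormedType.Exports.
Local Open Scope ring_scope.
Set Implicit Arguments. Unset Strict Implicit. Unset Printing Implicit Defensive.

Lemma sum_mul_expR_indicator (R : realType) (K : nat) (q : 'I_K -> R)
    (B : pred 'I_K) (lam : R) :
  \sum_k q k = 1 ->
  \sum_k q k * expR (lam * (B k)%:R) = 1 + (expR lam - 1) * \sum_(k | B k) q k.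
Proof.
move=> q_sum1.
transitivity (\sum_k q k + (expR lam - 1) * \sum_(k | B k) q k); last by rewrite q_sum1.
rewrite mulr_sumr [X in _ + X]big_mkcond -big_split /=.
by apply: eq_bigr => k _; case: (B k); rewrite ?mulr1 ?mulr0 ?expR0 ?addr0 //; ring.
Qed.

Section ProductDistribution.

Variables (R : realType) (K T : nat) (p : 'I_T -> 'I_K -> R).
Hypotheses (p_ge0 : forall t k, 0 <= p t k) (p_sum1 : forall t, \sum_k p t k = 1).

Definition expect_preds (f : {ffun 'I_T -> 'I_K} -> R) : R :=
  \sum_(om : {ffun 'I_T -> 'I_K}) (\prod_(t < T) p t (om t)) * f om.

Definition event_count (B : 'I_T -> pred 'I_K) (om : {ffun 'I_T -> 'I_K}) : nat :=
  \sum_(t < T) B t (om t).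

Lemma expect_preds_prod (g : 'I_T -> 'I_K -> R) :
  expect_preds (fun om => \prod_(t < T) g t (om t)) =
  \prod_(t < T) \sum_k p t k * g t k.
Proof. by rewrite bigA_distr_bigA; apply: eq_bigr => om _; rewrite -big_split. Qed.

Lemma prob_preds_weight_ge0 (om : {ffun 'I_T -> 'I_K}) :
  0 <= \prod_(t < T) p t (om t).
Proof. by apply: prodr_ge0 => t _; exact: p_ge0. Qed.

Lemma expect_preds1 : expect_preds (fun=> 1) = 1.
Proof.
transitivity (\prod_(t < T) \sum_k p t k * 1).
  by rewrite -expect_preds_prod; apply: eq_bigr => om _; rewrite big1_eq.
by rewrite big1 // => t _; under eq_bigr do rewrite mulr1.
Qed.

Lemma prob_preds_sub (E1 E2 : {ffun 'I_T -> 'I_K} -> Prop) :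
  (forall om, E1 om -> E2 om) -> prob_preds p E1 <= prob_preds p E2.
Proof.
move=> E12; rewrite /prob_preds [leLHS]big_mkcond [leRHS]big_mkcond.
apply: ler_sum => om _; case: (asboolP (E1 om)) => [/E12/asboolT -> // | _].
by case: ifP => // _; exact: prob_preds_weight_ge0.
Qed.

Lemma prob_preds_markov (E : {ffun 'I_T -> 'I_K} -> Prop)
    (f : {ffun 'I_T -> 'I_K} -> R) :
  (forall om, 0 <= f om) -> (forall om, ~ E om -> 1 <= f om) ->
  1 - expect_preds f <= prob_preds p E.
Proof.
move=> f_ge0 f_ge1; rewrite lerBlDr -[in leLHS]expect_preds1 /expect_preds /prob_preds.
rewrite [leLHS](bigID (fun om => `[< E om >])) /=.
apply: lerD; first by under eq_bigr do rewrite mulr1.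
apply: (@le_trans _ _ (\sum_(om | ~~ `[< E om >]) (\prod_(t < T) p t (om t)) * f om)).
  apply: ler_sum => om /asboolPn /f_ge1 f1.
  by rewrite ler_wpM2l // prob_preds_weight_ge0.
rewrite [leRHS](bigID (fun om => ~~ `[< E om >])) /= lerDl.
by apply: sumr_ge0 => om _; exact: mulr_ge0 (prob_preds_weight_ge0 om) (f_ge0 om).
Qed.

Lemma expect_preds_expR_count_le (B : 'I_T -> pred 'I_K) (lam : R) :
  expect_preds (fun om => expR (lam * (event_count B om)%:R)) <=
  expR ((expR lam - 1) * \sum_(t < T) \sum_(k | B t k) p t k).
Proof.
have -> : (fun om => expR (lam * (event_count B om)%:R)) =
          (fun om => \prod_(t < T) expR (lam * (B t (om t))%:R)).
  by apply/funext => om; rewrite /event_count natr_sum mulr_sumr expR_sum.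
rewrite (expect_preds_prod (fun t k => expR (lam * (B t k)%:R))).
rewrite mulr_sumr expR_sum; apply: ler_prod => t _.
apply/andP; split; last by rewrite sum_mul_expR_indicator // expR_ge1Dx.
by apply: sumr_ge0 => k _; rewrite mulr_ge0 ?expR_ge0.
Qed.

Lemma prob_preds_chernoff (B : 'I_T -> pred 'I_K) (lam delta : R) : 0 < delta ->
  1 - delta <= prob_preds p (fun om => lam * (event_count B om)%:R <=
     (expR lam - 1) * \sum_(t < T) \sum_(k | B t k) p t k + ln delta^-1).
Proof.
move=> delta_gt0; set c := (_ * _ + _).
pose f om := expR (lam * (event_count B om)%:R) * expR (- c).
apply: le_trans (prob_preds_markov (f := f) _ _); first last.
- by move=> om /negP; rewrite -ltNge /f -expRD -expR0 ler_expR subr_ge0 => /ltW.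
- by move=> om; rewrite /f mulr_ge0 ?expR_ge0.
rewrite lerD2l lerN2 /expect_preds.
under eq_bigr do rewrite mulrA; rewrite -mulr_suml.
apply: le_trans (ler_wpM2r (expR_ge0 _) (expect_preds_expR_count_le B lam)) _.
rewrite -expRD /c opprD addrA subrr add0r lnV ?posrE // opprK lnK ?posrE //.
Qed.

End ProductDistribution.

Lemma natr_ord_neq0 (R : numDomainType) (K : nat) (i : 'I_K) : K%:R != 0 :> R.
Proof. by rewrite pnatr_eq0 -lt0n (leq_ltn_trans _ (ltn_ord i)). Qed.

Lemma gapp_prob_ge0 (R : realType) (K : nat) (ys : 'I_K) (a : R) (k : 'I_K) :
  0 <= a <= 1 -> 0 <= gapp_prob ys a k.
Proof. by case/andP=> a0 a1; rewrite addr_ge0 ?mulr_ge0 ?divr_ge0 ?subr_ge0. Qed.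

Lemma gapp_prob_sum1 (R : realType) (K : nat) (ys : 'I_K) (a : R) :
  \sum_k gapp_prob ys a k = 1.
Proof.
have K_neq0 := natr_ord_neq0 R ys.
rewrite big_split /= (bigD1 ys) //= eqxx mulr1 big1 => [|k /negbTE ->];
  last by rewrite mulr0.
by rewrite sumr_const card_ord -[_ *+ K]mulr_natr; field.
Qed.

Lemma gapp_miss_prob_le (R : realType) (K : nat) (ys y : 'I_K) (l : 'I_K -> R) :
  (y != ys -> 1 <= (K%:R - 1) / K%:R * l y + K%:R^-1 * l ys) ->
  \sum_(k | k != y) gapp_prob ys (l ys) k <= (K%:R - 1) / K%:R * l y.
Proof.
move=> surrogate.
have K_neq0 := natr_ord_neq0 R ys.
have -> : \sum_(k | k != y) gapp_prob ys (l ys) k = 1 - gapp_prob ys (l ys) y.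
  by rewrite -(gapp_prob_sum1 ys (l ys)) [in RHS](bigD1 y) //= addrC addrK.
rewrite /gapp_prob; case: eqVneq => [-> | /surrogate].
  by rewrite mulr1 le_eqVlt -subr_eq0 (_ : _ - _ = 0) ?eqxx //; field.
by rewrite mulr0 add0r mulrC; lra.
Qed.

Lemma regret_self_bound (R : realType) (k L h G S SU : R) :
  0 <= k -> 0 < L -> 0 <= h -> 0 <= G -> G <= 2 * L * S ->
  S - SU <= h * Num.sqrt G ->
  (2 * k - 1) * S <= 2 * k * (SU + k * L * h ^+ 2).
Proof.
move=> k_ge0 L_gt0 h_ge0 G_ge0 G_le regret.
set v := Num.sqrt G in regret *.
have v_ge0 : 0 <= v by exact: sqrtr_ge0.
have v2_le : v ^+ 2 <= 2 * L * S by rewrite sqr_sqrtr.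
have am_gm : 2 * k * h * v <= S + 2 * k ^+ 2 * L * h ^+ 2.
  (* complete the square (v - 2 k L h)^2 and use v^2 <= 2 L S *)
  rewrite -(ler_pM2l (_ : 0 < 2 * L)) ?mulr_gt0 //.
  have := sqr_ge0 (v - 2 * k * L * h).
  have -> : (v - 2 * k * L * h) ^+ 2 =
            v ^+ 2 + 4 * k ^+ 2 * L ^+ 2 * h ^+ 2 - 2 * L * (2 * k * h * v) by ring.
  have -> : 2 * L * (S + 2 * k ^+ 2 * L * h ^+ 2) =
            2 * L * S + 4 * k ^+ 2 * L ^+ 2 * h ^+ 2 by ring.
  lra.
by have := ler_wpM2l k_ge0 regret; lra.
Qed.

Lemma regret_self_bound_realizable (R : realType) (L h G S : R) :
  0 < L -> 0 <= h -> 0 <= G -> G <= 2 * L * S -> S <= h * Num.sqrt G ->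
  S <= 2 * L * h ^+ 2.
Proof.
move=> L_gt0 h_ge0 G_ge0 G_le regret.
have := regret_self_bound ler01 L_gt0 h_ge0 G_ge0 G_le (SU := 0).
by rewrite subr0 => /(_ regret); lra.
Qed.

Lemma expR_le_inv1B (R : realType) (x : R) : x < 1 -> expR x <= (1 - x)^-1.
Proof.
move=> x_lt1; have -> : expR x = (expR (- x))^-1 by rewrite expRN invrK.
by rewrite lef_pV2 ?posrE ?expR_gt0 ?subr_gt0 // expR_ge1Dx.
Qed.

Lemma expR_mul2_le (R : realType) (x : R) : x < 1 -> expR (2 * x) <= (1 - x)^-2.
Proof.
move=> x_lt1; rewrite -[2]/(2%:R) expRM_natl -exprVn !expr2.
by apply: ler_pM; rewrite ?expR_ge0 ?expR_le_inv1B.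
Qed.

Lemma expR_rate_le (R : realType) (k : R) : 1 <= k ->
  (expR (2 / (3 * k + 1)) - 1) * (2 * k - 2) <= 2 / (3 * k + 1) * (2 * k - 1).
Proof.
move=> k_ge1; set m := 3 * k + 1.
have m_gt0 : 0 < m by rewrite /m; lra.
have e_le : expR (2 / m) <= (m / (3 * k)) ^+ 2.
  have -> : m / (3 * k) = (1 - 1 / m)^-1 by rewrite /m; field; lra.
  rewrite exprVn mul1r; apply: expR_mul2_le.
  by rewrite invf_lt1 // /m; lra.
apply: le_trans (ler_wpM2r _ (lerB e_le (lexx 1))) _; first lra.
rewrite -subr_ge0.
have -> : 2 / m * (2 * k - 1) - ((m / (3 * k)) ^+ 2 - 1) * (2 * k - 2) =
          (16 * k + 2) / (9 * k ^+ 2 * m) by rewrite /m; field; lra.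
by rewrite divr_ge0 ?mulr_ge0 ?sqr_ge0 //; lra.
Qed.

Lemma expR_half_le (R : realType) : expR (1 / 2 : R) <= 16 / 9.
Proof.
have -> : 1 / 2 = 2 * (1 / 4) :> R by field.
have -> : 16 / 9 = (1 - 1 / 4)^-2 :> R by field.
by apply: expR_mul2_le; lra.
Qed.

Lemma predn_div_le1 (R : realType) (K : nat) : (K%:R - 1) / K%:R <= 1 :> R.
Proof.
have [-> | K_gt0] := posnP K; first by rewrite invr0 mulr0 ler01.
by rewrite ler_pdivrMr ?ltr0n // mul1r lerBlDr lerDl.
Qed.

Lemma mistake_count_le (R : realType) (K : nat) (N Q S B l : R) :
  0 <= S -> 0 <= B -> Q <= (K%:R - 1) / K%:R * S ->
  (2 * K%:R - 1) * S <= 2 * K%:R * B ->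
  2 / (3 * K%:R + 1) * N <= (expR (2 / (3 * K%:R + 1)) - 1) * Q + l ->
  N <= B + (3 * K%:R + 1) / 2 * l.
Proof.
move=> S_ge0 B_ge0 Q_le self_bound count_le.
set k : R := K%:R in Q_le self_bound count_le *.
set lam := 2 / (3 * k + 1) in count_le *.
have k_ge0 : 0 <= k by exact: ler0n.
have lam_gt0 : 0 < lam by rewrite divr_gt0 //; lra.
have beta_ge0 : 0 <= expR lam - 1 by have := expR_ge1Dx lam; lra.
have rate : (expR lam - 1) * Q <= lam * B.
  have [K0 | K_gt0] := posnP K.
    (* the junk value 0^-1 = 0 turns the hypothesis on Q into Q <= 0 *)
    move: Q_le; rewrite /k K0 invr0 mulr0 mul0r => Q_le0.
    by apply: le_trans (mulr_ge0 (ltW lam_gt0) B_ge0); rewrite mulr_ge0_le0.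
  have k_ge1 : 1 <= k by rewrite ler1n.
  apply: le_trans (ler_wpM2l beta_ge0 Q_le) _.
  have -> : (expR lam - 1) * ((k - 1) / k * S) =
            (expR lam - 1) * (2 * k - 2) * (S / (2 * k)) by field; lra.
  apply: le_trans (ler_wpM2r _ (expR_rate_le k_ge1)) _; first by rewrite divr_ge0 //; lra.
  rewrite -/lam -mulrA; apply: ler_wpM2l; first exact: ltW.
  by rewrite mulrA ler_pdivrMr 1?mulrC //; lra.
rewrite -(ler_pM2l lam_gt0) mulrDr mulrA.
have -> : lam * ((3 * k + 1) / 2) = 1 by rewrite /lam; field; lra.
lra.
Qed.

Lemma separable_mistake_count_le (R : realType) (K : nat) (N Q S L h l : R) :
  0 <= S -> 0 < L -> 0 <= l -> Q <= (K%:R - 1) / K%:R * S ->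
  S <= 2 * L * h ^+ 2 ->
  1 / 2 * N <= (expR (1 / 2) - 1) * Q + l ->
  N <= 4 * L * h ^+ 2 + 11 / 4 * l.
Proof.
move=> S_ge0 L_gt0 l_ge0 Q_le S_le count_le.
have Q_leS : Q <= S by apply: le_trans Q_le (ler_piMl S_ge0 (predn_div_le1 R K)).
have beta_ge0 : 0 <= expR (1 / 2 : R) - 1 by have := expR_ge1Dx (1 / 2 : R); lra.
have beta_le : expR (1 / 2 : R) - 1 <= 7 / 9 by have := expR_half_le R; lra.
have rate : (expR (1 / 2) - 1) * Q <= 7 / 9 * (2 * L * h ^+ 2).
  apply: le_trans (ler_wpM2l beta_ge0 Q_leS) _.
  by apply: le_trans (ler_wpM2r S_ge0 beta_le) _; apply: ler_wpM2l.
by have := mulr_ge0 (ltW L_gt0) (sqr_ge0 h); lra.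
Qed.

Theorem theorem3
  (R : realType) (K d T : nat)
  (Ws : set 'M[R]_(K, d)) (HWs : convex_set Ws)
  (nrm : 'M[R]_(K, d) -> R) (Hnrm : is_norm nrm)
  (sel : 'M[R]_(K, d) -> 'rV[R]_d -> 'I_K) (Hsel : is_argmax_sel sel)
  (ell : 'M[R]_(K, d) -> 'rV[R]_d -> 'I_K -> R)
  (x : 'I_T -> 'rV[R]_d) (y : 'I_T -> 'I_K)
  (L : R) (HL : 0 < L)
  (* ell : W x R^d x [K] -> R_+, convex in W *)
  (Hell_nonneg : forall W xx k, Ws W -> 0 <= ell W xx k)
  (Hell_conv : forall xx k, convex_function Ws (fun W => ell W xx k))
  (* surrogate condition, y* = argmax_k <W^k, x> *)
  (Hell_surr : forall W xx yy, Ws W -> yy != sel W xx ->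
     (K%:R - 1) / K%:R * ell W xx yy + K%:R^-1 * ell W xx (sel W xx) >= 1)
  (* each ell_t is a regular surrogate loss with constant L *)
  (Hreg : forall (t : 'I_T) W, Ws W ->
     differentiable (fun V => ell V (x t) (y t)) W /\
     nrm (gradient (fun V => ell V (x t) (y t)) W) ^+ 2
       <= 2 * L * ell W (x t) (y t))
  (* iterates W_1, ..., W_T produced by the OCO algorithm A on the losses
     hat ell_t = ell_t (full information: v_t = 1) *)
  (W : 'I_T -> 'M[R]_(K, d)) (HW : forall t, Ws (W t))
  (h : 'M[R]_(K, d) -> R) (Hh : forall U, Ws U -> 0 <= h U)
  (HA : forall U, Ws U ->
     \sum_(t < T) (ell (W t) (x t) (y t) - ell U (x t) (y t))
       <= h U * Num.sqrt (\sum_(t < T)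
             nrm (gradient (fun V => ell V (x t) (y t)) (W t)) ^+ 2))
  (* gap map a : R^{K x d} x R^d -> [0,1] *)
  (a : 'M[R]_(K, d) -> 'rV[R]_d -> R)
  (Ha : forall V xx, 0 <= a V xx <= 1)
  (Hagap : forall t, a (W t) (x t) = ell (W t) (x t) (sel (W t) (x t))) :
  let p : 'I_T -> 'I_K -> R :=
    fun t => gapp_prob (sel (W t) (x t)) (a (W t) (x t)) in
  (forall delta : R, 0 < delta < 1 ->
     prob_preds p (fun om => forall U, Ws U ->
        (mistakes y om)%:R <= \sum_(t < T) ell U (x t) (y t)
                              + K%:R * L * h U ^+ 2
                              + (3 * K%:R + 1) / 2 * ln (delta^-1))
     >= 1 - delta)
  /\
  (forall U, Ws U -> \sum_(t < T) ell U (x t) (y t) = 0 ->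
   forall delta : R, 0 < delta < 1 ->
     prob_preds p (fun om =>
        (mistakes y om)%:R <= 4 * L * h U ^+ 2 + 11 / 4 * ln (delta^-1))
     >= 1 - delta).
Proof.
move=> p.
pose S := \sum_(t < T) ell (W t) (x t) (y t).
pose G := \sum_(t < T) nrm (gradient (fun V => ell V (x t) (y t)) (W t)) ^+ 2.
pose Q := \sum_(t < T) \sum_(k | k != y t) p t k.
have p_ge0 t k : 0 <= p t k by exact: gapp_prob_ge0.
have p_sum1 t : \sum_k p t k = 1 by exact: gapp_prob_sum1.
have S_ge0 : 0 <= S by apply: sumr_ge0 => t _; exact: Hell_nonneg.
have G_ge0 : 0 <= G by apply: sumr_ge0 => t _; exact: sqr_ge0.
have G_le : G <= 2 * L * S.
  by rewrite mulr_sumr; apply: ler_sum => t _; exact: (Hreg t _ (HW t)).2.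
have Q_le : Q <= (K%:R - 1) / K%:R * S.
  rewrite mulr_sumr; apply: ler_sum => t _; rewrite /p Hagap.
  exact: gapp_miss_prob_le (Hell_surr _ _ _ (HW t)).
have regret U : Ws U -> S - \sum_(t < T) ell U (x t) (y t) <= h U * Num.sqrt G.
  by move=> HU; rewrite -sumrB; exact: HA.
have chernoff lam delta : 0 < delta -> 1 - delta <= prob_preds p (fun om =>
    lam * (mistakes y om)%:R <= (expR lam - 1) * Q + ln delta^-1).
  exact: (prob_preds_chernoff p_ge0 p_sum1 (fun t k => k != y t)).
have ln_inv_ge0 (delta : R) : 0 < delta < 1 -> 0 <= ln delta^-1.
  by case/andP=> delta_gt0 delta_lt1; rewrite ln_ge0 // invf_ge1 ?ltW.
split=> [delta delta01 | U HU SU0 delta delta01].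
  apply: le_trans (chernoff (2 / (3 * K%:R + 1)) _ (andP delta01).1)
                  (prob_preds_sub p_ge0 _) => om count_le U HU.
  apply: mistake_count_le S_ge0 _ Q_le _ count_le.
    apply: addr_ge0; first by apply: sumr_ge0 => t _; exact: Hell_nonneg.
    by apply: mulr_ge0; [apply: mulr_ge0; [exact: ler0n | exact: ltW] | exact: sqr_ge0].
  exact: regret_self_bound (ler0n _ _) HL (Hh U HU) G_ge0 G_le (regret U HU).
apply: le_trans (chernoff (1 / 2) _ (andP delta01).1)
                (prob_preds_sub p_ge0 _) => om count_le.
apply: (separable_mistake_count_le S_ge0 HL (ln_inv_ge0 _ delta01) Q_le _ count_le).
apply: regret_self_bound_realizable HL (Hh U HU) G_ge0 G_le _.
by rewrite -[S]subr0 -SU0 regret.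
Qed.
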